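(* Let RV (Range Voting) be the voting rule that, on any profile, elects an alternative maximizing the social welfare of the voters of that profile. In any district-based election with $m$ alternatives, $n$ voters and $k$ districts using RV in every district, for any election winner $a$, $$\frac{\max_{j}\mathrm{SW}(j\mid\mathbf v)}{\mathrm{SW}(a\mid\mathbf v)}\le \begin{cases} 1+\dfrac{mk}{2} & \text{(symmetric)},\\[2mm] 1+\dfrac{m}{2}\left(\dfrac{n+\max_{d}n_d}{\min_{d}n_d}-1\right) & \text{(unweighted)},\\[2mm] 1+m\left(\dfrac{n}{\min_{d}n_d}-1\right) & \text{(unrestricted)}. \end{cases}$$
   Context: A district-based election consists of a set $\mathcal M$ of $m\ge 2$ alternatives, a set $\mathcal N$ of $n$ voters, a partition $\mathcal D$ of $\mathcal N$ into $k$ nonempty districts (district $d$ has $n_d$ voters), positive weights $w_d>0$, and a valuation profile $\mathbf v$ with $v_{ij}\ge0$ and $\sum_j v_{ij}=1$ for every voter $i$. In each district $d$ the local winner $j_d$ is the output of the voting rule on the subprofile of voters in $d$ (local ties broken arbitrarily); the election winner is any alternative in $\arg\max_j\sum_d w_d\mathbf 1[j=j_d]$. $\mathrm{SW}(j\mid\mathbf v)=\sum_i v_{ij}$. Symmetric: $n_d=n/k$, $w_d=1$; unweighted: $w_d=1$; unrestricted: arbitrary sizes and positive weights. *)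

From HB Require Import structures.
From mathcomp Require Import all_boot all_order all_algebra.
Set Implicit Arguments. Unset Strict Implicit. Unset Printing Implicit Defensive.
Import Order.TTheory GRing.Theory Num.Theory.
Local Open Scope ring_scope.

Section Election.
Variables (R : realFieldType) (A V D : finType).
(* A : alternatives, V : voters, D : districts,
   dist : V -> D assigns each voter to its district (the partition),
   v i j : valuation of voter i for alternative j. *)

Definition SW (v : V -> A -> R) (j : A) : R := \sum_(i : V) v i j.

Definition district_SW (v : V -> A -> R) (dist : V -> D) (d : D) (j : A) : R :=
  \sum_(i : V | dist i == d) v i j.

Definition RV_local_winners (v : V -> A -> R) (dist : V -> D) (jd : D -> A) : Prop :=
  forall (d : D) (j : A), district_SW v dist d j <= district_SW v dist d (jd d).

Definition score (w : D -> R) (jd : D -> A) (j : A) : R :=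
  \sum_(d : D | jd d == j) w d.

Definition election_winner (w : D -> R) (jd : D -> A) (a : A) : Prop :=
  forall j : A, score w jd j <= score w jd a.

Definition dsize (dist : V -> D) (d : D) : nat := #|[set i : V | dist i == d]|.

(* min_d n_d and max_d n_d (min taken with initial value n >= every n_d) *)
Definition min_dsize (dist : V -> D) : nat := \big[minn/#|V|]_(d : D) dsize dist d.
Definition max_dsize (dist : V -> D) : nat := \max_(d : D) dsize dist d.

Definition valid_profile (v : V -> A -> R) : Prop :=
  (forall i j, 0 <= v i j) /\ (forall i, \sum_(j : A) v i j = 1).

End Election.

From HB Require Import structures.
From mathcomp Require Import all_boot all_order all_algebra.
From mathcomp Require Import ring lra.
Set Implicit Arguments. Unset Strict Implicit. Unset Printing Implicit Defensive.
Import Order.TTheory GRing.Theory Num.Theory.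
Local Open Scope ring_scope.

(* Write S_d(j) for the welfare of j among the n_d voters of district d.
   Since every voter's valuations sum to 1, sum_j S_d(j) = n_d; Range Voting
   picks a maximiser of S_d, so
   (1) a district won by a gives m * S_d(a) >= n_d (max >= average), whence
       s := sum of the sizes of the districts won by a satisfies s <= m SW(a);
   (2) in a district won by a, S_d(j) <= S_d(a); elsewhere S_d(j) <= n_d, so
       SW(j) <= SW(a) + (n - s);
   (3) more finely, in a district won by neither a nor j the local winner
       shares n_d with j and beats it, so S_d(j) <= n_d / 2, giving
       2 SW(j) <= 2 SW(a) + (n - s) + (sum of the sizes of districts won by j).
   The winner a carries at least one district, so s >= min_d n_d; with unit
   weights a wins t >= 1 districts and j at most t, so s >= t min_d n_d and j's
   districts weigh at most t max_d n_d.  Two purely real inequalities turn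
   (1)-(3) into the unrestricted and unweighted bounds; the symmetric bound is
   the unweighted one with n_d = n / k for every d. *)

Section DistrictWelfare.
Variables (R : realFieldType) (A V D : finType).
Variables (v : V -> A -> R) (dist : V -> D).
Hypothesis v_valid : valid_profile v.

Local Notation nd d := ((dsize dist d)%:R : R).

Lemma dsizeE d : nd d = \sum_(i | dist i == d) 1.
Proof.
rewrite /dsize sumr_const; congr (_ *+ _).
by apply: eq_card => i; rewrite inE.
Qed.

Lemma card_voters_by_district : (#|V|%:R : R) = \sum_d nd d.
Proof.
rewrite -sum1_card natr_sum (partition_big dist predT) //=.
by apply: eq_bigr => d _; rewrite dsizeE.
Qed.

Lemma SW_by_district j : SW v j = \sum_d district_SW v dist d j.
Proof. exact: (partition_big dist predT). Qed.

Lemma district_SW_ge0 d j : 0 <= district_SW v dist d j.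
Proof. by case: v_valid => v_ge0 _; apply: sumr_ge0 => i _. Qed.

(* Each voter distributes one unit of value, so district d holds n_d units. *)
Lemma district_SW_total d : \sum_j district_SW v dist d j = nd d.
Proof.
case: v_valid => _ v_sum1; rewrite dsizeE /district_SW exchange_big /=.
by apply: eq_bigr => i _; rewrite v_sum1.
Qed.

Lemma district_SW_pair_le d j j' : j != j' ->
  district_SW v dist d j + district_SW v dist d j' <= nd d.
Proof.
move=> neq_jj'; rewrite -district_SW_total (bigD1 j) //= (bigD1 j') 1?eq_sym //=.
by rewrite addrA lerDl sumr_ge0 // => l _; apply: district_SW_ge0.
Qed.

Lemma district_SW_le d j : district_SW v dist d j <= nd d.
Proof.
rewrite -district_SW_total (bigD1 j) //= lerDl.
by apply: sumr_ge0 => l _; apply: district_SW_ge0.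
Qed.

Variable jd : D -> A.
Hypothesis jd_RV : RV_local_winners v dist jd.

Lemma RV_winner_share d : nd d <= #|A|%:R * district_SW v dist d (jd d).
Proof.
rewrite -district_SW_total mulr_natl -sumr_const.
by apply: ler_sum => j _; apply: jd_RV.
Qed.

Lemma won_size_le_SW a :
  \sum_(d | jd d == a) nd d <= #|A|%:R * SW v a.
Proof.
rewrite SW_by_district [X in _ * X](bigID (fun d => jd d == a)) /= mulrDr.
rewrite -[X in X <= _]addr0 lerD //; last first.
  by rewrite mulr_ge0 ?sumr_ge0 // => d _; apply: district_SW_ge0.
rewrite mulr_sumr; apply: ler_sum => d /eqP <-; exact: RV_winner_share.
Qed.

(* Step (2): j beats a only in districts a does not win. *)
Lemma SW_le_lost_size a j :
  SW v j <= SW v a + \sum_(d | jd d != a) nd d.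
Proof.
rewrite !SW_by_district (big_mkcond (fun d => jd d != a)) -big_split /=.
apply: ler_sum => d _.
case: eqP => [<- | _] /=; first by rewrite addr0; apply: jd_RV.
by rewrite -[X in X <= _]add0r lerD ?district_SW_ge0 ?district_SW_le.
Qed.

Lemma SW_le_lost_won_size a j :
  2 * SW v j <= 2 * SW v a + \sum_(d | jd d != a) nd d
                           + \sum_(d | jd d == j) nd d.
Proof.
rewrite !SW_by_district !mulr_sumr !(big_mkcond (fun d => jd d != a)).
rewrite (big_mkcond (fun d => jd d == j)) -!big_split /=.
apply: ler_sum => d _.
have := district_SW_ge0 d a; have := district_SW_le d j; have := jd_RV d j.
case: eqP => [<- | /eqP neq_a] /=; first by case: ifP => _; lra.
case: eqP => [-> | /eqP neq_j] /=; first lra.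
have := district_SW_pair_le d neq_j; lra.
Qed.

End DistrictWelfare.

Lemma geq_bigminn (I : finType) (F : I -> nat) (x : nat) (i : I) :
  (\big[minn/x]_j F j <= F i)%N.
Proof.
have : i \in index_enum I by rewrite mem_index_enum.
elim: (index_enum I) => // j s IHs; rewrite inE big_cons.
case/orP=> [/eqP <- | /IHs]; first exact: geq_minl.
exact: leq_trans (geq_minr _ _).
Qed.

Section DistrictSizes.
Variables (V D : finType) (dist : V -> D).

Lemma min_dsize_le d : (min_dsize dist <= dsize dist d)%N.
Proof. exact: geq_bigminn. Qed.

Lemma leq_min_dsize x :
  (x <= #|V|)%N -> (forall d, x <= dsize dist d)%N -> (x <= min_dsize dist)%N.
Proof.
move=> le_xV le_x; rewrite /min_dsize.
by apply: (big_ind (fun y => x <= y)%N) => // y z; rewrite leq_min => ->.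
Qed.

Lemma dsize_le_max d : (dsize dist d <= max_dsize dist)%N.
Proof. exact: leq_bigmax. Qed.

Lemma dsize_gt0 d : (exists i, dist i = d) -> (0 < dsize dist d)%N.
Proof. by case=> i <-; apply/card_gt0P; exists i; rewrite inE. Qed.

Lemma min_dsize_gt0 (d0 : D) :
  (forall d, exists i, dist i = d) -> (0 < min_dsize dist)%N.
Proof.
move=> nonempty; apply: leq_min_dsize => [|d]; last exact: dsize_gt0.
by case: (nonempty d0) => i _; apply/card_gt0P; exists i.
Qed.

Lemma symmetric_dsizes (d0 : D) :
  (forall d, dsize dist d * #|D| = #|V|)%N ->
  min_dsize dist = dsize dist d0 /\ max_dsize dist = dsize dist d0.
Proof.
move=> sym; have k_gt0 : (0 < #|D|)%N by apply/card_gt0P; exists d0.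
have same d : dsize dist d = dsize dist d0.
  by apply/eqP; rewrite -(eqn_pmul2r k_gt0) !sym.
split; apply/eqP; rewrite eqn_leq.
  rewrite min_dsize_le; apply: leq_min_dsize => [|d]; last by rewrite same.
  by rewrite -(sym d0) leq_pmulr.
by rewrite dsize_le_max andbT; apply/bigmax_leqP => d _; rewrite same.
Qed.

End DistrictSizes.

Section Winner.
Variables (R : realFieldType) (D A : finType) (w : D -> R) (jd : D -> A).
Hypothesis w_gt0 : forall d, 0 < w d.

Lemma le_sum_won (F : D -> R) j da :
  (forall d, 0 <= F d) -> jd da = j -> F da <= \sum_(d | jd d == j) F d.
Proof.
move=> F_ge0 won; rewrite (bigD1 da) ?won //= lerDl.
by apply: sumr_ge0 => d _.
Qed.

(* With positive weights, any district contributes to the winner's score,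
   so the election winner carries at least one district. *)
Lemma winner_wins_district a (d0 : D) :
  election_winner w jd a -> exists d, jd d = a.
Proof.
move=> a_wins; have [d /eqP <- | none] := pickP (fun d => jd d == a).
  by exists d.
have : w d0 <= score w jd a.
  apply: le_trans (a_wins (jd d0)).
  by rewrite /score (bigD1 d0) //= lerDl sumr_ge0 // => d _; apply: ltW.
by rewrite /score big_pred0 // leNgt w_gt0.
Qed.

Lemma won_size_bounds (F : D -> R) (lo hi : R) j :
  (forall d, w d = 1) -> (forall d, lo <= F d <= hi) ->
  lo * score w jd j <= \sum_(d | jd d == j) F d <= hi * score w jd j.
Proof.
move=> w1 F_bnd; rewrite /score !mulr_sumr.
by apply/andP; split; apply: ler_sum => d _; rewrite w1 mulr1; case/andP: (F_bnd d).
Qed.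

End Winner.

Section Arithmetic.
Variable R : realFieldType.

(* Unrestricted bound from steps (1)-(2): SW(j) <= SW(a) + r, s <= m SW(a),
   min_d n_d <= s, and n = s + r. *)
Lemma unrestricted_bound (x y m s r nmin : R) :
  0 <= x -> 0 < nmin -> nmin <= s -> s <= m * x -> 0 <= r -> y <= x + r ->
  y <= (1 + m * ((s + r) / nmin - 1)) * x.
Proof.
move=> x_ge0 nmin_gt0 le_nmin_s s_le r_ge0 y_le.
set q := (s + r) / nmin.
have q_nmin : q * nmin = s + r by rewrite /q divfK // gt_eqF.
have q_ge1 : 1 <= q by nra.
have : 0 <= (m * x - s) * (q - 1) by apply: mulr_ge0; lra.
have : 0 <= (s - nmin) * q by apply: mulr_ge0; lra.
nra.
Qed.

(* Unweighted bound from steps (1) and (3): 2 SW(j) <= 2 SW(a) + r + s_j,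
   with t >= 1 districts won by a, so t min_d n_d <= s and s_j <= t max_d n_d. *)
Lemma unweighted_bound (x y m s r sj t nmin nmax : R) :
  0 <= x -> 0 < nmin -> 0 <= nmax -> 1 <= t -> nmin * t <= s -> sj <= nmax * t ->
  s <= m * x -> 0 <= r -> 2 * y <= 2 * x + r + sj ->
  y <= (1 + m / 2 * ((s + r + nmax) / nmin - 1)) * x.
Proof.
move=> x_ge0 nmin_gt0 nmax_ge0 t_ge1 s_ge sj_le s_le r_ge0 y_le.
set q := (s + r + nmax) / nmin.
have q_nmin : q * nmin = s + r + nmax by rewrite /q divfK // gt_eqF.
have nmin_le_s : nmin <= s by nra.
have q_ge1 : 1 <= q by nra.
have : 0 <= (m * x - s) * (q - 1) by apply: mulr_ge0; lra.
have : 0 <= (s - nmin * t) * q by apply: mulr_ge0; lra.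
have : 0 <= (t - 1) * (s + r) by apply: mulr_ge0; lra.
have : nmin * t * q = t * (s + r + nmax) by rewrite -q_nmin; ring.
nra.
Qed.

(* With equal district sizes c and n = c k, the unweighted bound reads
   1 + m k / 2. *)
Lemma symmetric_bound_factor (m c k : R) :
  c != 0 -> m / 2 * ((c * k + c) / c - 1) = m * k / 2.
Proof. by move=> c_neq0; field. Qed.

End Arithmetic.

Theorem corollary1 (R : realFieldType) (A V D : finType)
    (v : V -> A -> R) (dist : V -> D) (w : D -> R) (jd : D -> A) (a : A) :
    (2 <= #|A|)%N ->
    valid_profile v ->
    (forall d : D, exists i : V, dist i = d) ->
    (forall d : D, 0 < w d) ->
    RV_local_winners v dist jd ->
    election_winner w jd a ->
    let m : R := #|A|%:R in
    let n : R := #|V|%:R in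
    let k : R := #|D|%:R in
    let nmin : R := (min_dsize dist)%:R in
    let nmax : R := (max_dsize dist)%:R in
    (* unrestricted *)
    (forall j : A, SW v j <= (1 + m * (n / nmin - 1)) * SW v a) /\
    (* unweighted *)
    ((forall d : D, w d = 1) ->
      forall j : A, SW v j <= (1 + m / 2 * ((n + nmax) / nmin - 1)) * SW v a) /\
    (* symmetric *)
    ((forall d : D, w d = 1) -> (forall d : D, (dsize dist d * #|D|)%N = #|V|) ->
      forall j : A, SW v j <= (1 + m * k / 2) * SW v a).
Proof.
move=> _ v_valid districts_nonempty w_gt0 jd_RV a_wins m n k nmin nmax.
(* Without districts every welfare vanishes and all bounds are trivial. *)
have [d0 _ | no_district] := pickP (@predT D); last first.
  have SW0 j : SW v j = 0 by rewrite (@SW_by_district _ _ _ _ v dist) big_pred0.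
  by split; [|split] => *; rewrite !SW0 mulr0.
have [da jd_da] := winner_wins_district w_gt0 d0 a_wins.
set nd := fun d => (dsize dist d)%:R : R.
set s := \sum_(d | jd d == a) nd d; set r := \sum_(d | jd d != a) nd d.
have n_sr : n = s + r.
  by rewrite /n (card_voters_by_district _ dist) (bigID (fun d => jd d == a)).
have r_ge0 : 0 <= r by apply: sumr_ge0.
have SWa_ge0 : 0 <= SW v a by case: v_valid => v_ge0 _; apply: sumr_ge0.
have s_le := won_size_le_SW v_valid jd_RV a.
have nmin_gt0 : 0 < nmin by rewrite ltr0n (min_dsize_gt0 d0).
have nd_bnd d : nmin <= nd d <= nmax by rewrite !ler_nat min_dsize_le dsize_le_max.
have unweighted : (forall d, w d = 1) ->
    forall j, SW v j <= (1 + m / 2 * ((n + nmax) / nmin - 1)) * SW v a.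
  move=> w1 j; have /andP[s_ge _] := won_size_bounds jd a w1 nd_bnd.
  have /andP[_ sj_le] := won_size_bounds jd j w1 nd_bnd.
  have t_ge1 : 1 <= score w jd a.
    by rewrite -(w1 da) le_sum_won // => d; rewrite ltW.
  rewrite n_sr; apply: unweighted_bound t_ge1 s_ge _ s_le r_ge0
    (SW_le_lost_won_size v_valid jd_RV a j) => //.
  by apply: le_trans sj_le _; rewrite ler_wpM2l.
split; last split => //.
  move=> j; rewrite n_sr.
  apply: unrestricted_bound (SW_le_lost_size v_valid jd_RV a j) => //.
  have nd_ge0 d : 0 <= nd d by rewrite ler0n.
  by apply: le_trans (le_sum_won nd_ge0 jd_da); case/andP: (nd_bnd da).
(* Symmetric case: the unweighted bound with n_d = c for all d and n = c k. *)
move=> w1 sym j; apply: le_trans (unweighted w1 j) _.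
have [min_c max_c] := symmetric_dsizes d0 sym.
have n_ck : n = (dsize dist d0)%:R * k by rewrite /n /k -natrM sym.
rewrite /nmin /nmax min_c max_c n_ck symmetric_bound_factor //.
by rewrite pnatr_eq0 -lt0n dsize_gt0.
Qed.
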